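(* Let $A$ be a finite alphabet and $n\ge1$. The $n$-ball subshift $\mathbb F^{[n]}\curvearrowright\mathcal C^{[n]}$ of the full convex shift $\mathbb F(A)\curvearrowright\mathcal C(A)$ is $1$-step (as a convex subshift over the alphabet $A^{[n]}$).
   Context: Convex subshifts. Let $A$ be a finite alphabet, $\mathbb F=\mathbb F(A)$. $\mathcal C=\mathcal C(A)$ is the set of subsets $\xi\subseteq\mathbb F$ with $1\in\xi$ that are right-convex: whenever a reduced word $a_m^{\varepsilon_m}\cdots a_1^{\varepsilon_1}$ ($a_i\in A$, $\varepsilon_i=\pm1$) lies in $\xi$, so does $a_k^{\varepsilon_k}\cdots a_1^{\varepsilon_1}$ for all $k<m$; topology from $\{0,1\}^{\mathbb F}$. Full convex shift: partial action of $\mathbb F$ on $\mathcal C$ with domains $\mathcal C_\alpha=\{\xi:\alpha^{-1}\in\xi\}$, $\alpha.\xi=\xi\alpha^{-1}$ for $\alpha\in\xi$. A convex subshift is the restriction to a closed invariant $\Omega\subseteq\mathcal C$. An $n$-ball is $B\in\mathcal C$ with all $|\alpha|\le n$, together with radius $n$; $\xi^n=\{\alpha\in\xi:|\alpha|\le n\}$; $\mathcal B_n(\Omega)=\{\xi^n:\xi\in\Omega\}$. For an $n$-ball $B$, $\xi\not\equiv B$ means $(\alpha.\xi)^n\ne B$ for all $\alpha\in\xi$; $\Omega^{\mathcal F}=\{\xi\in\mathcal C:\xi\not\equiv B\ \forall B\in\mathcal F\}$. $\Omega$ is $R$-step if $\Omega=\Omega^{\mathcal F}$ for a finite set $\mathcal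 F$ of $R$-balls (equivalently, $\xi\in\mathcal C$ lies in $\Omega$ iff $(\alpha.\xi)^R\in\mathcal B_R(\Omega)$ for all $\alpha\in\xi$). $n$-ball subshift: for a convex subshift $\Omega$, let $A^{[n:\Omega]}$ be the finite set of formal symbols $[(a.\xi)^n\xleftarrow{a}\xi^n]$ with $\xi\in\Omega$, $a\in A$, $a\in\xi$ (a symbol $[B\xleftarrow{a}B']$ is determined by the triple $(B,a,B')$), and set $[B'\xleftarrow{a^{-1}}B]:=[B\xleftarrow{a}B']^{-1}$ in the free group $\mathbb F^{[n:\Omega]}=\mathbb F(A^{[n:\Omega]})$. For $\xi\in\Omega$ and $\alpha=s_m\cdots s_1\in\xi$ reduced ($s_i\in A\cup A^{-1}$), put $B_k=((s_k\cdots s_1).\xi)^n$ and $\phi_n(\xi,\alpha)=[B_m\xleftarrow{s_m}B_{m-1}]\cdots[B_1\xleftarrow{s_1}B_0]$, $\phi_n(\xi,1)=1$, $\phi_n(\xi)=\{\phi_n(\xi,\alpha):\alpha\in\xi\}\in\mathcal C(A^{[n:\Omega]})$. The $n$-ball subshift $\theta^{[n]}$ is the restriction of the full convex shift on $A^{[n:\Omega]}$ to $\Omega^{[n]}:=\phi_n(\Omega)$ (a convex subshift). For $\Omega=\mathcal C$ write $A^{[n]}$, $\mathbb F^{[n]}$, $\mathcal C^{[n]}$. *)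

From mathcomp Require Import all_boot.
From Stdlib Require Import ClassicalEpsilon.
Set Implicit Arguments. Unset Strict Implicit. Unset Printing Implicit Defensive.

(* A letter (a, true) is a, (a, false) is a^-1.
   A word a_m^{e_m} ... a_1^{e_1} is the list [:: s_m; ...; s_1]
   (written order: head = leftmost letter s_m). *)
Definition letter (L : Type) := (L * bool)%type.
Definition word (L : Type) := seq (letter L).
Definition inv_letter (L : Type) (x : letter L) : letter L := (x.1, ~~ x.2).

Definition cdec (T : Type) (x y : T) : bool :=
  if excluded_middle_informative (x = y) then true else false.

Fixpoint reduce (L : Type) (w : word L) : word L :=
  match w with
  | [::] => [::]
  | x :: w' =>
      match reduce w' with
      | y :: w'' => if cdec x (inv_letter y) then w'' else x :: y :: w''
      | [::] => [:: x]
      end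
  end.

Definition reduced (L : Type) (w : word L) : Prop := reduce w = w.

Definition fmul (L : Type) (u v : word L) : word L := reduce (u ++ v).

Definition subset (L : Type) := word L -> Prop.
Definition seteq (L : Type) (X Y : subset L) : Prop := forall w, X w <-> Y w.

(* xi \in C(L): xi ⊆ F, 1 \in xi, right-convex (a_m..a_1 \in xi => a_k..a_1 \in xi) *)
Definition convex (L : Type) (xi : subset L) : Prop :=
  [/\ (forall w, xi w -> reduced w),
      xi [::] &
      (forall x w, xi (x :: w) -> xi w)].

(* alpha.xi = xi alpha^{-1} = { gamma in F : gamma alpha \in xi } (meant for alpha \in xi) *)
Definition act (L : Type) (alpha : word L) (xi : subset L) : subset L :=
  fun gamma => reduced gamma /\ xi (fmul gamma alpha).

Definition ball (L : Type) (n : nat) (xi : subset L) : subset L :=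
  fun gamma => xi gamma /\ size gamma <= n.

Definition is_ball (L : Type) (n : nat) (B : subset L) : Prop :=
  convex B /\ (forall w, B w -> size w <= n).

Definition avoids (L : Type) (n : nat) (xi B : subset L) : Prop :=
  forall alpha, xi alpha -> ~ seteq (ball n (act alpha xi)) B.

Definition OmegaF (L : Type) (n : nat) (Fs : seq (subset L)) : subset L -> Prop :=
  fun xi => convex xi /\ (forall B, List.In B Fs -> avoids n xi B).

Definition is_step (L : Type) (R : nat) (Omega : subset L -> Prop) : Prop :=
  exists Fs : seq (subset L),
    (forall B, List.In B Fs -> is_ball R B) /\
    (forall xi, Omega xi <-> OmegaF R Fs xi).

(* symbol [B <-a- B'] with B = (a.xi)^n, B' = xi^n, xi \in C, a \in xi *)
Record ball_sym (A : Type) (n : nat) := BallSym {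
  bs_B : subset A;
  bs_a : A;
  bs_B' : subset A;
  bs_valid : exists xi : subset A,
      [/\ convex xi, xi [:: (bs_a, true)],
          bs_B = ball n (act [:: (bs_a, true)] xi) &
          bs_B' = ball n xi]
}.

(* the letter x of F^[n] equals [B <-s- B'], where [B' <-a^-1- B] := [B <-a- B']^-1 *)
Definition sym_is (A : Type) (n : nat) (x : letter (ball_sym A n))
    (B : subset A) (s : letter A) (B' : subset A) : Prop :=
  if s.2 then
    [/\ x.2 = true, bs_B x.1 = B, bs_a x.1 = s.1 & bs_B' x.1 = B']
  else
    [/\ x.2 = false, bs_B x.1 = B', bs_a x.1 = s.1 & bs_B' x.1 = B].

(* phi_rel xi alpha w : w = phi_n(xi, alpha), for alpha = s_m..s_1 :
   w = [B_m <-s_m- B_{m-1}] ... [B_1 <-s_1- B_0], B_k = ((s_k..s_1).xi)^n *)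
Fixpoint phi_rel (A : Type) (n : nat) (xi : subset A)
    (alpha : word A) (w : word (ball_sym A n)) : Prop :=
  match alpha, w with
  | [::], [::] => True
  | s :: alpha', x :: w' =>
      @phi_rel A n xi alpha' w' /\
      sym_is x (ball n (act (s :: alpha') xi)) s (ball n (act alpha' xi))
  | _, _ => False
  end.

Definition phi (A : Type) (n : nat) (xi : subset A) : subset (ball_sym A n) :=
  fun w => exists alpha, xi alpha /\ @phi_rel A n xi alpha w.

Definition Cn (A : Type) (n : nat) : subset (ball_sym A n) -> Prop :=
  fun psi => exists xi : subset A, convex xi /\ seteq psi (@phi A n xi).

From Pilot Require Import Defs.
From mathcomp Require Import all_boot.
From Stdlib Require Import ClassicalEpsilon FunctionalExtensionality PropExtensionality ProofIrrelevance Classical.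
Set Implicit Arguments. Unset Strict Implicit. Unset Printing Implicit Defensive.

(* Forgetting the balls in the words of a convex set [psi] over [A^[n]] yields a
   convex set [xi0] over [A].  If every local 1-ball of [psi] is a 1-ball of some
   [phi_n(xi)], an induction on word length shows that the n-balls recorded along
   every word of [psi] are the n-balls of the corresponding translates of [xi0], so
   [psi = phi_n(xi0)].  Conversely [phi_n] commutes with the shift, so the local
   1-balls of [phi_n(xi)] are 1-balls of [C^[n]].  As [A^[n]] is finite there are
   finitely many 1-balls, and forbidding those that are not 1-balls of [C^[n]]
   presents [C^[n]] as a 1-step subshift. *)

Lemma cdecP (T : Type) (x y : T) : reflect (x = y) (cdec x y).
Proof. by rewrite /cdec; case: excluded_middle_informative => H; constructor. Qed.

Lemma cdec_refl (T : Type) (x : T) : cdec x x.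
Proof. exact/cdecP. Qed.

Lemma cdec_neq (T : Type) (x y : T) : x <> y -> cdec x y = false.
Proof. by move=> nxy; apply/cdecP. Qed.

Section FreeReduction.
Variable L : Type.
Implicit Types (x y z : letter L) (u v w : word L).

Lemma inv_letterK : involutive (@inv_letter L).
Proof. by case=> a b; rewrite /inv_letter /= negbK. Qed.

Definition lmul x w : word L :=
  match w with
  | y :: w' => if cdec x (inv_letter y) then w' else x :: y :: w'
  | [::] => [:: x]
  end.

Lemma reduce_cons x w : reduce (x :: w) = lmul x (reduce w).
Proof. by []. Qed.

Lemma size_reduce w : size (reduce w) <= size w.
Proof.
elim: w => [//|x w IH]; rewrite reduce_cons /=.
case: (reduce w) IH => [|y r] IH //=; case: cdec => /=; last by [].
exact: leq_trans (ltnW IH) (leqnSn _).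
Qed.

Lemma reduced_behead x w : reduced (x :: w) -> reduced w.
Proof.
rewrite /reduced reduce_cons; have := size_reduce w.
case: (reduce w) => [|y r] /=; first by move=> _ [->].
case: cdec => [le_r_w /(congr1 size) /= szE|_ [<-]] //.
by move: le_r_w; rewrite /= szE => /ltnW; rewrite ltnn.
Qed.

Lemma reduced_cons x w :
  reduced (x :: w) <-> reduced w /\ (forall y w', w = y :: w' -> x <> inv_letter y).
Proof.
split=> [xw_red|[w_red head_ok]].
  have w_red := reduced_behead xw_red; split=> // y w' wE xE.
  move: xw_red; rewrite /reduced reduce_cons w_red wE /= xE cdec_refl.
  by move/(congr1 size)/eqP; rewrite /= ltn_eqF // ltnW.
rewrite /reduced reduce_cons w_red; case: w w_red head_ok => [//|y w'] _ head_ok /=.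
by rewrite cdec_neq //; apply: head_ok.
Qed.

Lemma reduced1 x : reduced [:: x].
Proof. by []. Qed.

Lemma lmul_reduced x w : reduced w -> reduced (lmul x w).
Proof.
case: w => [//|y w] yw_red /=; case: cdecP => [_|nxy]; first exact: reduced_behead yw_red.
by apply/reduced_cons; split=> // z w' [<- _].
Qed.

Lemma reduce_reduced w : reduced (reduce w).
Proof. by elim: w => [//|x w IH]; rewrite reduce_cons; apply: lmul_reduced. Qed.

Lemma lmul_cons x w : reduced (x :: w) -> lmul x w = x :: w.
Proof. by case: w => [//|y w] /reduced_cons [_ head_ok] /=; rewrite cdec_neq //; apply: head_ok. Qed.

Lemma lmul_inv_cons x w : lmul (inv_letter x) (x :: w) = w.
Proof. by rewrite /= cdec_refl. Qed.

Lemma lmulK x w : reduced w -> lmul x (lmul (inv_letter x) w) = w.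
Proof.
case: w => [|y w] w_red /=; first by rewrite inv_letterK cdec_refl.
case: (cdecP (inv_letter x) (inv_letter y)) => [xy|nxy].
  rewrite -[x]inv_letterK xy inv_letterK.
  by case: w w_red => [//|z w] /reduced_cons [_ head_ok] /=; rewrite cdec_neq //; apply: head_ok.
by rewrite /= inv_letterK cdec_refl.
Qed.

Lemma reduce_cat u v : reduce (u ++ v) = foldr lmul (reduce v) u.
Proof. by elim: u => [//|x u IH]; rewrite cat_cons reduce_cons IH. Qed.

Lemma foldr_lmul_reduced r u : reduced r -> reduced (foldr lmul r u).
Proof. by move=> r_red; elim: u => [//|x u IH] /=; apply: lmul_reduced. Qed.

Lemma foldr_lmul_lmul r s x : reduced r -> reduced s ->
  foldr lmul r (lmul x s) = lmul x (foldr lmul r s).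
Proof.
move=> r_red; case: s => [//|y s] ys_red /=; case: cdecP => [->|_] //.
by rewrite -{2}[y]inv_letterK lmulK //; apply: foldr_lmul_reduced.
Qed.

Lemma foldr_lmul_reduce r u : reduced r -> foldr lmul r (reduce u) = foldr lmul r u.
Proof.
move=> r_red; elim: u => [//|x u IH].
by rewrite reduce_cons foldr_lmul_lmul ?IH //; apply: reduce_reduced.
Qed.

Lemma reduce_catr u v : reduce (u ++ reduce v) = reduce (u ++ v).
Proof. by rewrite !reduce_cat reduce_reduced. Qed.

Lemma reduce_catl u v : reduce (reduce u ++ v) = reduce (u ++ v).
Proof. by rewrite !reduce_cat foldr_lmul_reduce //; apply: reduce_reduced. Qed.

Lemma reduced_rcons u x : reduced (rcons u x) -> reduced u.
Proof.
elim: u => [//|y u IH] /= /reduced_cons [ux_red head_ok].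
by apply/reduced_cons; split=> [|z w' uE]; [apply: IH | apply: (head_ok z (rcons w' x)); rewrite uE].
Qed.

Lemma reduced_rcons_cat u v x :
  reduced (rcons u x) -> reduced (x :: v) -> reduced (rcons u x ++ v).
Proof.
elim: u => [//|y u IH] /= /reduced_cons [ux_red head_ok] xv_red.
apply/reduced_cons; split; first exact: IH.
by case: u {IH ux_red} head_ok => [|z u] head_ok y' w' /= [<- _]; apply: head_ok.
Qed.

Lemma reduce_cat_cases w al : reduced w -> reduced al ->
  (exists p, al = p ++ reduce (w ++ al)) \/
  (exists x w' r, w = x :: w' /\ reduce (w ++ al) = x :: r).
Proof.
move=> + al_red; elim: w => [|x w IH] xw_red; first by left; exists [::]; rewrite /= al_red.
rewrite cat_cons reduce_cons.
have [[p alE]|[y [w' [r [wE wal]]]]] := IH (reduced_behead xw_red).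
  case: (reduce (w ++ al)) alE => [|y r] alE /=; first by right; exists x, w, [::].
  case: cdec; last by right; exists x, w, (y :: r).
  by left; exists (p ++ [:: y]); rewrite -catA.
move/reduced_cons: xw_red => [_ head_ok].
by rewrite wal /= cdec_neq; [right; exists x, w, (y :: r) | apply: head_ok wE].
Qed.

Lemma fmul_nil w : reduced w -> fmul [::] w = w.
Proof. by []. Qed.

Lemma fmul_letter x w : reduced w -> fmul [:: x] w = lmul x w.
Proof. by move=> w_red; rewrite /fmul cat1s reduce_cons w_red. Qed.

End FreeReduction.

Section ConvexSets.
Variable L : Type.
Implicit Types (xi X Y : Defs.subset L) (x : letter L) (w al : word L).

Lemma convex_suffix xi p w : convex xi -> xi (p ++ w) -> xi w.
Proof. by case=> _ _ xi_prefix; elim: p => [//|x p IH] /= /xi_prefix. Qed.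

Lemma convex_ball xi k : convex xi -> convex (ball k xi).
Proof.
case=> xi_red xi1 xi_prefix; split=> [w [/xi_red]//|//|x w [/xi_prefix xiw /ltnW]].
by split.
Qed.

Lemma convex_act xi al : convex xi -> xi al -> convex (act al xi).
Proof.
move=> xi_cvx xi_al; have [xi_red xi1 xi_prefix] := xi_cvx.
split=> [w []//||x w [xw_red xi_xwal]]; first by split; rewrite // /fmul cat0s (xi_red _ xi_al).
have w_red := reduced_behead xw_red; split=> //.
have [[p alE]|[y [w' [r [wE walE]]]]] := reduce_cat_cases w_red (xi_red _ xi_al).
  by move: xi_al; rewrite {1}alE; apply: convex_suffix.
move/reduced_cons: xw_red => [_ head_ok].
move: xi_xwal; rewrite [fmul (x :: w) al]/fmul cat_cons reduce_cons walE /= cdec_neq; last exact: head_ok wE.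
by rewrite /fmul walE => /xi_prefix.
Qed.

Lemma actM xi u v : act u (act v xi) = act (fmul u v) xi.
Proof.
apply: functional_extensionality => g; apply: propositional_extensionality.
rewrite /act /fmul reduce_catl reduce_catr catA.
by split=> [[? []]|[? ?]]; do ![split=> //]; apply: reduce_reduced.
Qed.

Lemma act1 xi : convex xi -> act [::] xi = xi.
Proof.
case=> xi_red _ _; apply: functional_extensionality => g; apply: propositional_extensionality.
rewrite /act /fmul cats0; split=> [[->]//|xi_g].
by have g_red := xi_red _ xi_g; split=> //; rewrite g_red.
Qed.

Lemma mem_act_letter xi al x : reduced al -> act al xi [:: x] = xi (lmul x al).
Proof.
move=> al_red; apply: propositional_extensionality.
by rewrite /act fmul_letter //; split=> [[]|]//; split.
Qed.

Lemma convex_seteq X Y : seteq X Y -> convex Y -> convex X.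
Proof.
move=> XY [Y_red Y1 Y_prefix]; split=> [w /XY|| x w /XY /Y_prefix /XY] //.
- exact: Y_red.
- exact/XY.
Qed.

Lemma ball_act_seteq X Y al k : seteq X Y -> seteq (ball k (act al X)) (ball k (act al Y)).
Proof. by move=> XY w; split=> -[[? /XY ?] ?]. Qed.

End ConvexSets.

Section BallAlphabet.
Variables (A : Type) (n : nat).
Local Notation sym := (letter (ball_sym A n)).
Implicit Types (xi : Defs.subset A) (s t : letter A) (al : word A) (y z : sym)
  (beta : word (ball_sym A n)).

(* The symbol [B <-s- B'] is an edge from [src = B'] to [tgt = B] labelled [s]. *)
Definition label y : letter A := (bs_a y.1, y.2).
Definition src y : Defs.subset A := if y.2 then bs_B' y.1 else bs_B y.1.
Definition tgt y : Defs.subset A := if y.2 then bs_B y.1 else bs_B' y.1.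

Lemma sym_isE y B s B' : sym_is y B s B' <-> [/\ label y = s, tgt y = B & src y = B'].
Proof.
case: y s => r b [a c]; rewrite /sym_is /label /tgt /src /=.
by case: c; case: b => /=; split=> [[]|[[]]] // *; subst.
Qed.

Lemma sym_ext y z : label y = label z -> tgt y = tgt z -> src y = src z -> y = z.
Proof.
case: y z => [[B a B' p] b] [[C c C' q] d] [ac bd]; subst c d.
by rewrite /tgt /src; case: b => /= tE sE; subst; rewrite (proof_irrelevance _ p q).
Qed.

Lemma label_inv y : label (inv_letter y) = inv_letter (label y).
Proof. by []. Qed.

Lemma tgt_inv y : tgt (inv_letter y) = src y.
Proof. by case: y => r []. Qed.

Lemma src_inv y : src (inv_letter y) = tgt y.
Proof. by case: y => r []. Qed.

Lemma phi_rel_label xi al beta : phi_rel xi al beta -> map label beta = al.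
Proof.
by elim: al beta => [|s al IH] [|y beta] //= [/IH -> /sym_isE [-> _ _]].
Qed.

Lemma phi_rel_fun xi al beta beta' : phi_rel xi al beta -> phi_rel xi al beta' -> beta = beta'.
Proof.
elim: al beta beta' => [|s al IH] [|y beta] [|y' beta'] //=.
move=> [/IH rel_eq /sym_isE [ys yt ysrc]] [/rel_eq -> /sym_isE [y's y't y'src]].
by congr (_ :: _); apply: sym_ext; congruence.
Qed.

Lemma phi_rel_reduced xi al beta : phi_rel xi al beta -> reduced al -> reduced beta.
Proof.
elim: al beta => [|s al IH] [|y beta] //= [rel /sym_isE [ys _ _]] /reduced_cons [al_red head_ok].
apply/reduced_cons; split=> [|z beta' betaE yE]; first exact: IH.
have := phi_rel_label rel; rewrite betaE /= => alE.
by apply: (head_ok (label z) (map label beta')); rewrite -?alE // -ys yE.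
Qed.

Lemma phi_convex xi : convex xi -> convex (@phi A n xi).
Proof.
case=> xi_red xi1 xi_prefix.
split=> [w [al [/xi_red al_red rel]]||x w [[|s al] [xi_al //= [rel _]]]].
- exact: phi_rel_reduced rel al_red.
- by exists [::].
- by exists al; split=> //; apply: xi_prefix xi_al.
Qed.

Lemma mem_phi_cons xi al beta y : phi_rel xi al beta ->
  phi xi (y :: beta) <->
  [/\ xi (label y :: al), tgt y = ball n (act (label y :: al) xi) & src y = ball n (act al xi)].
Proof.
move=> rel; split=> [[[|s al'] [xi_al //= [rel' /sym_isE [ys yt ysrc]]]]|[xi_al yt ysrc]].
  by move: (phi_rel_label rel'); rewrite (phi_rel_label rel) => alE; subst.
by exists (label y :: al); split=> //=; split=> //; apply/sym_isE.
Qed.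

Lemma mem_phi1 xi y :
  phi xi [:: y] <->
  [/\ xi [:: label y], tgt y = ball n (act [:: label y] xi) & src y = ball n (act [::] xi)].
Proof. exact: mem_phi_cons. Qed.

Lemma mem_phi_lmul xi al beta y : convex xi -> xi al -> phi_rel xi al beta ->
  phi xi (lmul y beta) <->
  [/\ xi (lmul (label y) al), tgt y = ball n (act (lmul (label y) al) xi)
    & src y = ball n (act al xi)].
Proof.
move=> xi_cvx xi_al rel; have [xi_red _ xi_prefix] := xi_cvx.
case: al beta rel xi_al => [|t al] [|z beta] //= rel xi_al; first exact: mem_phi1.
have [rel' /sym_isE [zt zt_tgt zt_src]] := rel.
case: (cdecP y (inv_letter z)) => [->|nyz].
  rewrite label_inv zt cdec_refl tgt_inv src_inv zt_tgt zt_src.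
  by have xi_al' := xi_prefix _ _ xi_al; split=> _; [split | exists al].
rewrite (@mem_phi_cons xi (t :: al) (z :: beta) y rel).
case: (cdecP (label y) (inv_letter t)) => [yt|_]; last exact: iff_refl.
split=> [[xi_yal _ _]|[_ y_tgt y_src]].
  by move/xi_red/reduced_cons: xi_yal => [_ /(_ t al erefl)].
by case: nyz; apply: sym_ext; rewrite ?label_inv ?tgt_inv ?src_inv; congruence.
Qed.

(* [phi] commutes with the shift: the local 1-ball of [phi xi] at [phi(xi, al)]
   is the 1-ball of [phi (al.xi)]. *)
Lemma phi_ball1_act xi al beta : convex xi -> xi al -> phi_rel xi al beta ->
  seteq (ball 1 (@phi A n (act al xi))) (ball 1 (act beta (phi xi))).
Proof.
move=> xi_cvx xi_al rel; have [xi_red _ _] := xi_cvx.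
have al_red := xi_red _ xi_al.
have beta_red : reduced beta := phi_rel_reduced rel al_red.
case=> [|y [|z w]] /=; last by split=> -[].
  split=> _; split=> //; last by exists [::]; split=> //; case: (convex_act xi_cvx xi_al).
  by split=> //; rewrite fmul_nil //; exists al.
rewrite /ball mem_act_letter // (mem_phi_lmul y xi_cvx xi_al rel) mem_phi1 mem_act_letter //.
by rewrite !actM fmul_letter // fmul_nil //; split=> -[? _].
Qed.

(* For [s = a^-1] the symbol is [[B' <-a- B]], realised by [a^-1.xi]. *)
Lemma exists_sym xi s : convex xi -> xi [:: s] ->
  exists y, [/\ label y = s, tgt y = ball n (act [:: s] xi) & src y = ball n xi].
Proof.
case: s => a [] xi_cvx xi_s.
  have V : exists xi0, [/\ convex xi0, xi0 [:: (a, true)],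
      ball n (act [:: (a, true)] xi) = ball n (act [:: (a, true)] xi0)
    & ball n xi = ball n xi0] by exists xi.
  by exists (BallSym V, true).
pose xi' := act [:: (a, false)] xi.
have xi'_cvx : convex xi' := convex_act xi_cvx xi_s.
have xi'_a : xi' [:: (a, true)].
  by rewrite /xi' mem_act_letter //= cdec_refl; case: xi_cvx.
have V : exists xi0, [/\ convex xi0, xi0 [:: (a, true)],
    ball n (act [:: (a, true)] xi') = ball n (act [:: (a, true)] xi0)
  & ball n xi' = ball n xi0] by exists xi'.
exists (BallSym V, false); split=> //.
by rewrite /src /= /xi' actM fmul_letter //= cdec_refl act1.
Qed.

End BallAlphabet.

Arguments label {A n} y.

Section Realization.
Variables (A : Type) (n : nat) (psi : Defs.subset (ball_sym A n)).
Variable Z : word (ball_sym A n) -> Defs.subset A.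
Hypothesis psi_convex : convex psi.
Hypothesis Z_convex : forall beta, psi beta -> convex (Z beta).
Hypothesis Z_ball1 :
  forall beta, psi beta -> seteq (ball 1 (@phi A n (Z beta))) (ball 1 (act beta psi)).

Local Notation sym := (letter (ball_sym A n)).
Implicit Types (y z : sym) (beta : word (ball_sym A n)) (s : letter A) (g : word A).

Let psi_red : forall beta, psi beta -> reduced beta.
Proof. by case: psi_convex. Qed.

Let psi_prefix : forall y beta, psi (y :: beta) -> psi beta.
Proof. by case: psi_convex. Qed.

Lemma mem_psi_lmul beta y : psi beta ->
  psi (lmul y beta) <->
  [/\ Z beta [:: label y], tgt y = ball n (act [:: label y] (Z beta)) & src y = ball n (Z beta)].
Proof.
move=> psi_beta; have [to_psi of_psi] := Z_ball1 psi_beta [:: y].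
have phi_y : phi (Z beta) [:: y] <-> psi (lmul y beta).
  rewrite -(fmul_letter y (psi_red psi_beta)); split=> [Z_y|psi_y].
  - by case: (to_psi (conj Z_y (leqnn 1))) => -[].
  - by case: (of_psi (conj (conj (reduced1 y) psi_y) (leqnn 1))).
by rewrite -phi_y mem_phi1 (act1 (Z_convex psi_beta)).
Qed.

Lemma psi_src_tgt y beta : psi (y :: beta) ->
  src y = ball n (Z beta) /\ tgt y = ball n (Z (y :: beta)).
Proof.
move=> psi_ybeta; have psi_beta := psi_prefix psi_ybeta.
have psi_y : psi (lmul y beta) by rewrite (lmul_cons (psi_red psi_ybeta)).
have [_ _ ->] := (mem_psi_lmul y psi_beta).1 psi_y.
have := (mem_psi_lmul (inv_letter y) psi_ybeta).1; rewrite lmul_inv_cons src_inv.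
by case/(_ psi_beta).
Qed.

Lemma tgt_psi_lmul y beta : psi beta -> psi (lmul y beta) -> tgt y = ball n (Z (lmul y beta)).
Proof.
case: beta => [|z beta] psi_beta psi_y; first by case: (psi_src_tgt psi_y).
move: psi_y; rewrite /=; case: (cdecP y (inv_letter z)) => [->|_] psi_y.
  by rewrite tgt_inv; case: (psi_src_tgt psi_beta).
by case: (psi_src_tgt psi_y).
Qed.

Lemma ball_Z_lmul y beta : psi beta -> psi (lmul y beta) ->
  ball n (Z (lmul y beta)) = ball n (act [:: label y] (Z beta)).
Proof.
move=> psi_beta psi_y; rewrite -(tgt_psi_lmul psi_beta psi_y).
by have [_ -> _] := (mem_psi_lmul y psi_beta).1 psi_y.
Qed.

Lemma psi_lmul_label_inj beta y y' : psi beta ->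
  psi (lmul y beta) -> psi (lmul y' beta) -> label y = label y' -> y = y'.
Proof.
move=> psi_beta /(mem_psi_lmul y psi_beta) [_ yt ys] /(mem_psi_lmul y' psi_beta) [_ y't y's] yy'.
by apply: sym_ext; rewrite ?yt ?y't ?ys ?y's ?yy'.
Qed.

Lemma map_label_lmul y beta : psi beta -> psi (lmul y beta) ->
  map label (lmul y beta) = lmul (label y) (map label beta).
Proof.
case: beta => [//|z beta] psi_zbeta /=; case: (cdecP y (inv_letter z)) => [->|nyz] psi_y.
  by rewrite label_inv cdec_refl.
have psi_y' : psi (lmul y (z :: beta)) by rewrite /= cdec_neq.
have psi_z' : psi (lmul (inv_letter z) (z :: beta)).
  by rewrite lmul_inv_cons; apply: psi_prefix psi_zbeta.
case: cdecP => // yz; case: nyz.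
by apply: (psi_lmul_label_inj psi_zbeta psi_y' psi_z'); rewrite label_inv.
Qed.

Lemma reduced_map_label beta : psi beta -> reduced (map label beta).
Proof.
elim: beta => [//|y beta IH] psi_ybeta /=; have psi_beta := psi_prefix psi_ybeta.
apply/reduced_cons; split=> [|s w]; first exact: IH.
case: beta {IH} psi_ybeta psi_beta => [//|z beta] psi_yzbeta psi_zbeta [zs _] ys.
have /reduced_cons [_ head_ok] := psi_red psi_yzbeta.
apply: (head_ok z beta erefl); apply: (psi_lmul_label_inj psi_zbeta).
- by rewrite (lmul_cons (psi_red psi_yzbeta)).
- by rewrite lmul_inv_cons; apply: psi_prefix psi_zbeta.
- by rewrite label_inv ys zs.
Qed.

(* The candidate [xi] with [phi xi = psi]. *)
Definition label_image : Defs.subset A := fun g => exists beta, psi beta /\ map label beta = g.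

Lemma convex_label_image : convex label_image.
Proof.
split=> [g [beta [psi_beta <-]]||s g [[|y beta] [psi_ybeta //= [_ <-]]]].
- exact: reduced_map_label.
- by exists [::]; split=> //; case: psi_convex.
- by exists beta; split=> //; apply: psi_prefix psi_ybeta.
Qed.

Lemma map_label_inj beta beta' : psi beta -> psi beta' ->
  map label beta = map label beta' -> beta = beta'.
Proof.
elim: beta beta' => [|y beta IH] [|y' beta'] // psi_ybeta psi_ybeta' labelE.
have yy' : label y = label y' := congr1 (head (label y)) labelE.
have betaE : map label beta = map label beta' := congr1 behead labelE.
have psi_beta := psi_prefix psi_ybeta; have psi_beta' := psi_prefix psi_ybeta'.
have beta'E := IH _ psi_beta psi_beta' betaE; subst beta'; congr (_ :: _).
apply: (psi_lmul_label_inj psi_beta) => //.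
- by rewrite (lmul_cons (psi_red psi_ybeta)).
- by rewrite (lmul_cons (psi_red psi_ybeta')).
Qed.

Definition Z_matches k := forall beta, psi beta -> forall g, reduced g -> size g <= k ->
  (Z beta g <-> label_image (reduce (g ++ map label beta))).

Lemma Z_matches0 : Z_matches 0.
Proof.
move=> beta psi_beta [|//] _ _; rewrite /= (reduced_map_label psi_beta).
by split=> _; [exists beta | case: (Z_convex psi_beta)].
Qed.

Lemma exists_lmul_of_Z beta s : psi beta -> Z beta [:: s] ->
  exists y, label y = s /\ psi (lmul y beta).
Proof.
move=> psi_beta Z_s; have [y [ys yt ysrc]] := exists_sym n (Z_convex psi_beta) Z_s.
by exists y; split=> //; apply/(mem_psi_lmul y psi_beta); rewrite ys.
Qed.

Lemma exists_lmul_of_label_image beta g s : psi beta -> reduced (rcons g s) ->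
  label_image (reduce (rcons g s ++ map label beta)) ->
  exists y, label y = s /\ psi (lmul y beta).
Proof.
move=> psi_beta gs_red.
case: (classic (exists z beta', beta = z :: beta' /\ s = inv_letter (label z))).
  move=> [z [beta' [betaE sE]]] _; subst beta; exists (inv_letter z).
  by rewrite label_inv sE lmul_inv_cons; split=> //; apply: psi_prefix psi_beta.
move=> no_cancel; have s_beta_red : reduced (s :: map label beta).
  apply/reduced_cons; split=> [|t w]; first exact: reduced_map_label.
  case: beta psi_beta no_cancel => [//|z beta'] _ no_cancel labelE st.
  have zt : label z = t := congr1 (head t) labelE.
  by apply: no_cancel; exists z, beta'; rewrite st zt.
rewrite (reduced_rcons_cat gs_red s_beta_red) cat_rcons => /(convex_suffix convex_label_image).
case=> -[|y beta'] [psi_ybeta' //= labelE].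
have ys : label y = s := congr1 (head (label y)) labelE.
have betaE : map label beta' = map label beta := congr1 behead labelE.
have beta'E := map_label_inj (psi_prefix psi_ybeta') psi_beta betaE; subst beta'.
by exists y; split=> //; rewrite (lmul_cons (psi_red psi_ybeta')).
Qed.

(* Along the edge [y] of [psi], the ball of [Z] is translated by [label y]; this lets
   the last letter of the word be peeled off. *)
Lemma Z_matches_rcons k beta y g : k < n -> Z_matches k -> psi beta -> psi (lmul y beta) ->
  reduced (rcons g (label y)) -> size g <= k ->
  (Z beta (rcons g (label y)) <-> label_image (reduce (rcons g (label y) ++ map label beta))).
Proof.
move=> lt_k_n Zk psi_beta psi_y gy_red le_g_k; have g_red := reduced_rcons gy_red.
have le_g_n : size g <= n := leq_trans le_g_k (ltnW lt_k_n).
rewrite cat_rcons -reduce_catr reduce_cons (reduced_map_label psi_beta).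
rewrite -(map_label_lmul psi_beta psi_y) -(Zk _ psi_y _ g_red le_g_k).
have := congr1 (fun B => B g) (ball_Z_lmul psi_beta psi_y).
rewrite /ball /act /fmul cats1 gy_red /= => ballE.
split=> Zg; first by move: (conj (conj g_red Zg) le_g_n); rewrite -ballE => -[].
by move: (conj Zg le_g_n); rewrite ballE => -[[]].
Qed.

Lemma Z_matches_le k : k <= n -> Z_matches k.
Proof.
elim: k => [|k IH] le_k_n; first exact: Z_matches0.
have Zk := IH (ltnW le_k_n); move=> beta psi_beta g g_red.
case: (leqP (size g) k) => [le_g_k _|]; first exact: Zk.
case/lastP: g g_red => [//|g s] gs_red; rewrite size_rcons ltnS => _ le_g_k.
have match_y y : label y = s -> psi (lmul y beta) ->
    (Z beta (rcons g s) <-> label_image (reduce (rcons g s ++ map label beta))).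
  move=> ys psi_y; rewrite -ys.
  by apply: Z_matches_rcons le_k_n Zk psi_beta psi_y _ le_g_k; rewrite ys.
split=> [Zgs|Lgs].
  have Z_s : Z beta [:: s].
    by apply: (convex_suffix (p := g) (Z_convex psi_beta)); rewrite cats1.
  by have [y [ys psi_y]] := exists_lmul_of_Z psi_beta Z_s; apply/(match_y y ys psi_y).
have [y [ys psi_y]] := exists_lmul_of_label_image psi_beta gs_red Lgs.
exact/(match_y y ys psi_y).
Qed.

Lemma ball_Z beta : psi beta -> ball n (Z beta) = ball n (act (map label beta) label_image).
Proof.
move=> psi_beta; have [Z_red _ _] := Z_convex psi_beta.
have Z_label := Z_matches_le (leqnn n) psi_beta.
apply: functional_extensionality => g; apply: propositional_extensionality.
rewrite /ball /act /fmul; split=> [[Zg le_g_n]|[[g_red Lg] le_g_n]].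
  by have g_red := Z_red _ Zg; do !split=> //; apply/(Z_label g g_red le_g_n).
by split=> //; apply/(Z_label g g_red le_g_n).
Qed.

Lemma phi_rel_label_image beta : psi beta -> phi_rel label_image (map label beta) beta.
Proof.
elim: beta => [//|y beta IH] psi_ybeta; have psi_beta := psi_prefix psi_ybeta.
split; first exact: IH.
have [ysrc ytgt] := psi_src_tgt psi_ybeta.
by apply/sym_isE; split=> //; [rewrite ytgt | rewrite ysrc]; apply: ball_Z.
Qed.

Lemma Cn_of_local_balls : Cn psi.
Proof.
exists label_image; split; first exact: convex_label_image.
move=> beta; split=> [psi_beta|[al [[beta' [psi_beta' <-]] rel]]].
  by exists (map label beta); split; [exists beta | apply: phi_rel_label_image].
by rewrite (phi_rel_fun rel (phi_rel_label_image psi_beta')).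
Qed.

End Realization.

Definition is_Cn_ball1 (A : Type) (n : nat) (B : Defs.subset (ball_sym A n)) : Prop :=
  exists xi, convex xi /\ seteq (ball 1 (@phi A n xi)) B.

Lemma is_Cn_ball1_seteq (A : Type) (n : nat) (B B' : Defs.subset (ball_sym A n)) :
  seteq B B' -> is_Cn_ball1 B -> is_Cn_ball1 B'.
Proof. by move=> BB' [xi [xi_cvx xiB]]; exists xi; split=> // w; rewrite xiB. Qed.

Lemma Cn_local (A : Type) (n : nat) (psi : Defs.subset (ball_sym A n)) :
  Cn psi <-> convex psi /\ forall beta, psi beta -> is_Cn_ball1 (ball 1 (act beta psi)).
Proof.
split=> [[xi [xi_cvx psiE]]|[psi_cvx psi_ball1]].
  split=> [|beta /psiE [al [xi_al rel]]]; first exact: convex_seteq psiE (phi_convex n xi_cvx).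
  exists (act al xi); split=> [|w]; first exact: convex_act.
  by rewrite (phi_ball1_act xi_cvx xi_al rel w) (ball_act_seteq beta 1 psiE w).
pose realizes beta Zb := psi beta ->
  convex Zb /\ seteq (ball 1 (@phi A n Zb)) (ball 1 (act beta psi)).
have [Z HZ] : exists Z, forall beta, realizes beta (Z beta).
  apply: ClassicalEpsilon.choice => beta.
  case: (classic (psi beta)) => [/psi_ball1 [xi xiP]|npsi]; first by exists xi.
  by exists (fun _ => True).
exact: (@Cn_of_local_balls A n psi Z psi_cvx (fun beta b => (HZ beta b).1)
  (fun beta b => (HZ beta b).2)).
Qed.

Definition classic_bool (P : Prop) : bool := if excluded_middle_informative P then true else false.

Lemma classic_boolP (P : Prop) : reflect P (classic_bool P).
Proof. by rewrite /classic_bool; case: excluded_middle_informative => H; constructor. Qed.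

Lemma list_cover_inj (X Y : Type) (f : X -> Y) (lY : seq Y) :
  injective f -> exists lX, forall x, List.In (f x) lY -> List.In x lX.
Proof.
move=> f_inj; elim: lY => [|y lY [lX lXP]]; first by exists [::].
case: (classic (exists x0, f x0 = y)) => [[x0 <-]|no_pre].
  by exists (x0 :: lX) => x /= [/f_inj ->|/lXP]; auto.
by exists lX => x /= [fx|/lXP] //; case: no_pre; exists x.
Qed.

Lemma list_cover_preds (T : Type) (l : seq T) : exists Qs : seq (T -> Prop),
  forall P : T -> Prop, exists2 Q, List.In Q Qs & forall x, List.In x l -> (P x <-> Q x).
Proof.
elim: l => [|t l [Qs QsP]]; first by exists [:: fun _ => True] => P; exists (fun _ => True); [left|].
exists ([seq (fun x => x = t \/ Q x) | Q <- Qs] ++ [seq (fun x => x <> t /\ Q x) | Q <- Qs]).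
move=> P; have [Q QQs PQ] := QsP P.
have PQt x : x <> t -> List.In x (t :: l) -> (P x <-> Q x) by move=> xt [/esym|/PQ].
case: (classic (P t)) => [Pt|nPt].
  exists (fun x => x = t \/ Q x).
    by apply/List.in_or_app; left; apply: List.in_map.
  move=> x xl; case: (classic (x = t)) => [->|xt]; first by split=> // _; left.
  by rewrite PQt //; split=> [|[]//]; right.
exists (fun x => x <> t /\ Q x).
  by apply/List.in_or_app; right; apply: List.in_map.
move=> x xl; case: (classic (x = t)) => [->|xt]; first by split=> [/nPt|[]].
by rewrite PQt //; split=> [|[]].
Qed.

Section BoundedSubsets.
Variables (L : Type) (letters : seq (letter L)).
Hypothesis letters_all : forall x, List.In x letters.

Lemma list_cover_words k : exists Ws, forall w : word L, size w <= k -> List.In w Ws.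
Proof.
elim: k => [|k [Ws WsP]]; first by exists [:: [::]] => -[|//]; left.
exists ([::] :: List.flat_map (fun x => [seq x :: w | w <- Ws]) letters) => -[|x w] le_w_k.
  by left.
by right; apply/List.in_flat_map; exists x; split=> //; apply/List.in_map/WsP.
Qed.

Lemma list_cover_bounded_subsets k : exists Bs : seq (Defs.subset L),
  forall P : Defs.subset L, (forall w, P w -> size w <= k) -> List.In P Bs.
Proof.
have [Ws WsP] := list_cover_words k; have [Qs QsP] := list_cover_preds Ws.
exists [seq (fun w => Q w /\ size w <= k) | Q <- Qs] => P P_bounded.
have [Q QQs PQ] := QsP P; apply/List.in_map_iff; exists Q; split=> //.
apply: functional_extensionality => w; apply: propositional_extensionality.
case: (leqP (size w) k) => [le_w_k|lt_k_w].
  by rewrite -PQ; [split=> [[]|] | apply: WsP].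
by split=> [[]//|/P_bounded]; rewrite leqNgt lt_k_w.
Qed.

End BoundedSubsets.

Lemma In_of_mem (T : eqType) (x : T) (s : seq T) : x \in s -> List.In x s.
Proof. by elim: s => [//|y s IH]; rewrite in_cons => /orP [/eqP ->|/IH]; [left | right]. Qed.

Lemma list_cover_letters (A : finType) : exists l : seq (letter A), forall x, List.In x l.
Proof. by exists (enum {: A * bool}) => x; apply: In_of_mem; rewrite mem_enum. Qed.

Lemma list_cover_syms (A : finType) (n : nat) :
  exists l : seq (letter (ball_sym A n)), forall y, List.In y l.
Proof.
have [lA lAP] := list_cover_letters A; have [Bs BsP] := list_cover_bounded_subsets lAP n.
pose code (y : letter (ball_sym A n)) := (bs_B y.1, label y, bs_B' y.1).
have code_inj : injective code.
  move=> [[B a B' p] b] [[C c C' q] d] [BC ac bd B'C']; subst C c d C'.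
  by rewrite (proof_irrelevance _ p q).
have [l lP] := list_cover_inj (List.list_prod (List.list_prod Bs lA) Bs) code_inj.
exists l => y; apply: lP; have [xi [_ _ BE B'E]] := bs_valid y.1.
by do !apply/List.in_prod; rewrite ?BE ?B'E //; apply: BsP => w [].
Qed.

Theorem lemma3 (A : finType) (n : nat) (hn : 0 < n) :
  is_step 1 (@Cn A n).
Proof.
have [lY lYP] := list_cover_syms A n.
have [Bs BsP] := list_cover_bounded_subsets lYP 1.
pose forbidden (B : Defs.subset (ball_sym A n)) := is_ball 1 B /\ ~ is_Cn_ball1 B.
exists (List.filter (fun B => classic_bool (forbidden B)) Bs); split.
  by move=> B /List.filter_In [_ /classic_boolP []].
move=> psi; rewrite Cn_local; split=> [[psi_cvx psi_ball1]|[psi_cvx psi_avoids]].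
  split=> // B /List.filter_In [_ /classic_boolP [_ not_ball1]] beta psi_beta psiB.
  exact/not_ball1/(is_Cn_ball1_seteq psiB)/psi_ball1.
split=> // beta psi_beta; apply: NNPP => not_ball1.
have ball1 : is_ball 1 (ball 1 (act beta psi)).
  by split=> [|w []//]; apply/convex_ball/convex_act.
apply: (psi_avoids _ _ beta psi_beta) => [|w]; last exact: iff_refl.
apply/List.filter_In; split; last exact/classic_boolP.
by apply: BsP => w [].
Qed.
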